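(* Let $M$ be a universal left-c.e. semi-measure and $\mathcal S$ the collection of all left-c.e. semi-measures. There is a left-c.e. semi-measure $\widetilde M$ that is not universal such that $\mathsf{MLR}_{\widetilde M}=\mathsf{MLR}_M=\bigcup_{\rho\in\mathcal S}\mathsf{MLR}_\rho$.
   Context: $2^{<\omega}$ is the set of finite binary strings, $\varepsilon$ the empty string, $[\![\sigma]\!]=\{X\in2^\omega:\sigma\preceq X\}$, $[\![S]\!]=\bigcup_{\sigma\in S}[\![\sigma]\!]$. A semi-measure is $\rho:2^{<\omega}\to[0,1]$ with $\rho(\varepsilon)=1$ and $\rho(\sigma)\ge\rho(\sigma0)+\rho(\sigma1)$; it is left-c.e. if its values are uniformly approximable from below by a computable, non-decreasing sequence of rationals. A left-c.e. semi-measure $M$ is universal if for every left-c.e. semi-measure $\rho$ there is $c\in\omega$ with $\rho(\sigma)\le c\cdot M(\sigma)$ for all $\sigma$. For $E\subseteq2^{<\omega}$, $\rho(E)=\sum_{\sigma\in E}\rho(\sigma)$. $X\in\mathsf{MLR}_\rho$ iff $X\notin\bigcap_i[\![U_i]\!]$ for every uniformly c.e. sequence $(U_i)$ of subsets of $2^{<\omega}$ with $\rho(U_i)\le2^{-i}$ for all $i$. *)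

From HB Require Import structures.
From mathcomp Require Import all_boot all_order all_algebra.
From mathcomp Require Import all_classical all_reals.
From mathcomp Require Import ereal esum.
Set Implicit Arguments. Unset Strict Implicit. Unset Printing Implicit Defensive.
Import Order.TTheory GRing.Theory Num.Theory.
Local Open Scope ring_scope.

(* A concrete model of partial computable functions on nat:            *)
(* unary partial recursive functions with Cantor pairing.              *)

(* Cantor unpairing: enumerates (0,0),(1,0),(0,1),(2,0),(1,1),(0,2),... *)
Fixpoint unpair (n : nat) : nat * nat :=
  match n with
  | 0 => (0, 0)
  | n'.+1 => let: (a, b) := unpair n' in
             if a is a'.+1 then (a', b.+1) else (b.+1, 0)
  end.

Definition npair (a b : nat) : nat := ((a + b) * (a + b).+1) %/ 2 + b.

Inductive prog : Type :=
  | PZero : prog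
  | PSucc : prog
  | PFst  : prog
  | PSnd  : prog
  | PComp : prog -> prog -> prog
  | PPair : prog -> prog -> prog
  | PRec  : prog -> prog -> prog    (* h <a,0> = f a ; h <a,n+1> = g <a,<n, h <a,n>>> *)
  | PMu   : prog -> prog.           (* <a> |-> least m with f <a,m> = 0 (all earlier defined) *)

(* Fuel-bounded evaluation; [None] means "not (yet) converged". *)
Fixpoint eval (k : nat) (p : prog) (x : nat) {struct k} : option nat :=
  match k with
  | 0 => None
  | k'.+1 =>
    match p with
    | PZero => Some 0
    | PSucc => Some x.+1
    | PFst => Some (unpair x).1
    | PSnd => Some (unpair x).2
    | PComp f g => obind (eval k' f) (eval k' g x)
    | PPair f g =>
        match eval k' f x, eval k' g x with
        | Some a, Some b => Some (npair a b)
        | _, _ => None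
        end
    | PRec f g =>
        let a := (unpair x).1 in
        (fix loop (i : nat) : option nat :=
           match i with
           | 0 => eval k' f a
           | i'.+1 => obind (fun r => eval k' g (npair a (npair i' r))) (loop i')
           end) (unpair x).2
    | PMu f =>
        (fix search (j m : nat) : option nat :=
           match j with
           | 0 => None
           | j'.+1 =>
               match eval k' f (npair x m) with
               | Some 0 => Some m
               | Some _ => search j' m.+1
               | None => None
               end
           end) k' 0
    end
  end.

Definition computes (p : prog) (f : nat -> nat) : Prop :=
  forall x, exists k, eval k p x = Some (f x).

Definition computable (f : nat -> nat) : Prop := exists p, computes p f.

(* finite binary strings = seq bool; sigma0 = rcons sigma false *)
Definition bstring := seq bool.

(* bijective base-2 coding of strings *)
Fixpoint code (s : bstring) : nat :=
  match s with
  | [::] => 0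
  | b :: s' => (code s').*2 + 1 + b
  end.

(* decoding of naturals as rationals (surjective onto rat) *)
Definition int_of_nat (a : nat) : int :=
  if odd a then - (a./2.+1)%:Z else (a./2)%:Z.
Definition rat_of_nat (n : nat) : rat :=
  (int_of_nat (unpair n).1)%:~R / ((unpair n).2.+1)%:R.

Definition prefix (s : bstring) (X : nat -> bool) : Prop :=
  forall i, (i < size s)%N -> nth false s i = X i.

Definition in_cyl (U : set bstring) (X : nat -> bool) : Prop :=
  exists2 s, U s & prefix s X.

Definition semimeasure (R : realType) (rho : bstring -> R) : Prop :=
  (forall s, 0 <= rho s <= 1) /\
  rho [::] = 1 /\
  (forall s, rho (rcons s false) + rho (rcons s true) <= rho s).

Definition left_ce (R : realType) (rho : bstring -> R) : Prop :=
  exists f : nat -> nat, computable f /\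
    let q := fun s t => rat_of_nat (f (npair (code s) t)) in
    (forall s t, q s t <= q s t.+1) /\
    (forall s (eps : R), 0 < eps ->
       exists N, forall t, (N <= t)%N -> `|rho s - ratr (q s t)| < eps).

Definition left_ce_semimeasure (R : realType) (rho : bstring -> R) : Prop :=
  semimeasure rho /\ left_ce rho.

Definition universal (R : realType) (M : bstring -> R) : Prop :=
  forall rho : bstring -> R, left_ce_semimeasure rho ->
    exists c : nat, forall s, rho s <= c%:R * M s.

Definition measE (R : realType) (rho : bstring -> R) (E : set bstring) : \bar R :=
  (\esum_(s in E) (rho s)%:E)%R.

Definition unif_ce (U : nat -> set bstring) : Prop :=
  exists p : prog, forall i s,
    U i s <-> exists k y, eval k p (npair i (code s)) = Some y.

Definition MLR (R : realType) (rho : bstring -> R) (X : nat -> bool) : Prop :=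
  forall U : nat -> set bstring, unif_ce U ->
    (forall i, (measE rho (U i) <= ((2%:R : R) ^- i)%:E)%E) ->
    ~ (forall i, in_cyl (U i) X).

(** Let [Mt s = M s / 2 ^ k] when [s] starts with exactly [k] zeros followed by a
    one, and [Mt s = M s] when [s] contains no one.  This damping keeps the
    semi-measure inequality and is computable from the code of [s], so [Mt] is a
    left-c.e. semi-measure; it is not universal since [M (0^k 1) <= c Mt (0^k 1)]
    forces [2 ^ k <= c].  But a fixed [X] either is [0^omega] or starts with a
    fixed number [n] of zeros followed by a one, so [M <= 2 ^ n Mt] on all prefixes
    of [X]: a Martin-Löf test for [Mt] covering [X] yields one for [M] by shifting
    indices by [n] and keeping only the strings consistent with [0^n 1], a
    decidable set.  The same shift, with universality, shows [MLR_rho] is contained in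
    [MLR_M] for every left-c.e. [rho]. *)

From Pilot Require Import Defs.
From mathcomp Require Import all_boot all_order all_algebra.
From mathcomp Require Import all_classical all_reals.
From mathcomp Require Import ereal esum.
From mathcomp Require Import zify ring lra.
Import Order.TTheory GRing.Theory Num.Theory.
Set Implicit Arguments. Unset Strict Implicit. Unset Printing Implicit Defensive.
Local Notation eval := Defs.eval.
Local Notation code := Defs.code.
Local Notation prefix := Defs.prefix.

Lemma triangular_succ d : (d.+1 * d.+2) %/ 2 = (d * d.+1) %/ 2 + d.+1.
Proof.
have -> : (d.+1 * d.+2 = d.+1 * 2 + d * d.+1)%N by rewrite mulnC; lia.
by rewrite divnMDl // addnC.
Qed.

Lemma npair_Sr a b : npair a b.+1 = (npair a.+1 b).+1.
Proof. by rewrite /npair addnS addSn addnS. Qed.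

Lemma npair_S0 b : npair b.+1 0 = (npair 0 b).+1.
Proof. rewrite /npair !add0n !addn0 triangular_succ; lia. Qed.

Lemma unpair_npair a b : unpair (npair a b) = (a, b).
Proof.
move: {2}(a + b) (erefl (a + b)) => s; elim: s a b; first by case=> [|a] [|b].
move=> s IH a b; elim: b a => [|b IHb] a E.
  case: a E => [|a] E //; rewrite npair_S0 /= (IH 0%N a) //; lia.
rewrite npair_Sr /= IHb //; lia.
Qed.

Lemma npair_unpair n : npair (unpair n).1 (unpair n).2 = n.
Proof.
elim: n => [//|n IH] /=.
case E: (unpair n) => [[|a] b]; rewrite E /= in IH.
  by rewrite npair_S0 IH.
by rewrite npair_Sr IH.
Qed.

Fixpoint rec_loop (E : prog -> nat -> option nat) (f g : prog) (a i : nat) :=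
  match i with
  | 0 => E f a
  | i'.+1 => obind (fun r => E g (npair a (npair i' r))) (rec_loop E f g a i')
  end.

Fixpoint mu_search (E : prog -> nat -> option nat) (f : prog) (x j m : nat) :=
  match j with
  | 0 => None
  | j'.+1 => match E f (npair x m) with
             | Some 0 => Some m
             | Some _ => mu_search E f x j' m.+1
             | None => None
             end
  end.

Lemma eval_comp k f g x : eval k.+1 (PComp f g) x = obind (eval k f) (eval k g x).
Proof. by []. Qed.

Lemma eval_pair k f g x : eval k.+1 (PPair f g) x =
  if (eval k f x, eval k g x) is (Some a, Some b) then Some (npair a b) else None.
Proof. by []. Qed.

Lemma eval_rec k f g x :
  eval k.+1 (PRec f g) x = rec_loop (eval k) f g (unpair x).1 (unpair x).2.
Proof. by rewrite /=; elim: (unpair x).2 => //= i ->. Qed.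

Lemma eval_mu k f x : eval k.+1 (PMu f) x = mu_search (eval k) f x k 0.
Proof.
rewrite /= -[0%R]/0%N; move: {2 4}k 0%N; elim=> //= j IH m.
by case: (eval k f (npair x m)) => // -[|n] //; rewrite IH.
Qed.

Definition extends_eval (E E' : prog -> nat -> option nat) :=
  forall p x y, E p x = Some y -> E' p x = Some y.

Lemma rec_loop_extends E E' f g a i y : extends_eval E E' ->
  rec_loop E f g a i = Some y -> rec_loop E' f g a i = Some y.
Proof.
move=> EE'; elim: i y => [|i IH] y /=; first exact: EE'.
case Ei: (rec_loop E f g a i) => [r|] //= Eg.
by rewrite (IH _ Ei) /=; apply: EE'.
Qed.

Lemma mu_search_extends E E' f x j j' m y : extends_eval E E' -> (j <= j')%N ->
  mu_search E f x j m = Some y -> mu_search E' f x j' m = Some y.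
Proof.
move=> EE'; elim: j j' m => [//|j IH] [//|j'] m /= jj'.
case Em: (E f (npair x m)) => [[|n]|] //; rewrite (EE' _ _ _ Em) //.
exact: IH.
Qed.

Lemma mu_search_some E f x j m r :
  mu_search E f x j m = Some r -> E f (npair x r) = Some 0%N.
Proof.
elim: j m => [//|j IH] m /=.
by case Em: (E f (npair x m)) => [[|n]|] //; [case=> <- | exact: IH].
Qed.

Lemma mu_searchS E f x j m : mu_search E f x j.+1 m =
  if E f (npair x m) is Some n then (if n is 0 then Some m else mu_search E f x j m.+1)
  else None.
Proof. by []. Qed.

Lemma evalS k p x y : eval k p x = Some y -> eval k.+1 p x = Some y.
Proof.
elim: k p x y => [//|k IH] p x y.
have Ek : extends_eval (eval k) (eval k.+1) by move=> ???; apply: IH.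
case: p => [|||| f g | f g | f g | f] //.
- rewrite !eval_comp; case Eg: (eval k g x) => [z|] // Ef.
  by rewrite (IH _ _ _ Eg); apply: IH.
- rewrite !eval_pair.
  case Ef: (eval k f x) => [u|] //; case Eg: (eval k g x) => [v|] //.
  by rewrite (IH _ _ _ Ef) (IH _ _ _ Eg).
- by rewrite !eval_rec; apply: rec_loop_extends.
- by rewrite !eval_mu; apply: mu_search_extends.
Qed.

Lemma eval_extends k k' : (k <= k')%N -> extends_eval (eval k) (eval k').
Proof.
move=> /subnK <- p x y; elim: (k' - k)%N => [//|n IH] /IH.
by rewrite addSn; apply: evalS.
Qed.

Lemma computes_eval p f k x y : computes p f -> eval k p x = Some y -> y = f x.
Proof.
move=> pf E; have [k' E'] := pf x.
have := eval_extends (leq_maxl k k') E.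
by rewrite (eval_extends (leq_maxr k k') E') => -[].
Qed.

(** * Closure properties of computable functions *)

Lemma eq_computable f g : f =1 g -> computable f -> computable g.
Proof. by move=> fg [p pf]; exists p => x; rewrite -fg. Qed.

Lemma computable0 : computable (fun _ => 0%N).
Proof. by exists PZero => x; exists 1%N. Qed.

Lemma computableS : computable S.
Proof. by exists PSucc => x; exists 1%N. Qed.

Lemma computable_fst : computable (fun x => (unpair x).1).
Proof. by exists PFst => x; exists 1%N. Qed.

Lemma computable_snd : computable (fun x => (unpair x).2).
Proof. by exists PSnd => x; exists 1%N. Qed.

Lemma computable_comp f g :
  computable f -> computable g -> computable (fun x => f (g x)).
Proof.
move=> [pf Hf] [pg Hg]; exists (PComp pf pg) => x.
have [kg Eg] := Hg x; have [kf Ef] := Hf (g x).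
exists (maxn kf kg).+1; rewrite eval_comp (eval_extends _ Eg) ?leq_maxr //=.
by rewrite (eval_extends _ Ef) ?leq_maxl.
Qed.

Lemma computable_pair f g :
  computable f -> computable g -> computable (fun x => npair (f x) (g x)).
Proof.
move=> [pf Hf] [pg Hg]; exists (PPair pf pg) => x.
have [kg Eg] := Hg x; have [kf Ef] := Hf x.
exists (maxn kf kg).+1; rewrite eval_pair (eval_extends _ Eg) ?leq_maxr //=.
by rewrite (eval_extends _ Ef) ?leq_maxl.
Qed.

Fixpoint prim_rec (f g : nat -> nat) (a i : nat) : nat :=
  if i is i'.+1 then g (npair a (npair i' (prim_rec f g a i'))) else f a.

Lemma computable_rec f g : computable f -> computable g ->
  computable (fun x => prim_rec f g (unpair x).1 (unpair x).2).
Proof.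
move=> [pf Hf] [pg Hg]; exists (PRec pf pg) => x.
suff [k Hk] : exists k, rec_loop (eval k) pf pg (unpair x).1 (unpair x).2 =
    Some (prim_rec f g (unpair x).1 (unpair x).2).
  by exists k.+1; rewrite eval_rec.
elim: (unpair x).2 => [|i [k Hk]] /=; first exact: Hf.
have [k' Ek'] := Hg (npair (unpair x).1 (npair i (prim_rec f g (unpair x).1 i))).
exists (maxn k k'); rewrite (rec_loop_extends (eval_extends (leq_maxl k k')) Hk) /=.
by rewrite (eval_extends _ Ek') ?leq_maxr.
Qed.

Lemma computable_bin (B : nat -> nat -> nat) f g :
  computable (fun x => B (unpair x).1 (unpair x).2) ->
  computable f -> computable g -> computable (fun x => B (f x) (g x)).
Proof.
move=> HB Hf Hg; apply: eq_computable (computable_comp HB (computable_pair Hf Hg)).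
by move=> x; rewrite unpair_npair.
Qed.

Lemma computable_id : computable (fun x => x).
Proof.
by apply: eq_computable (computable_pair computable_fst computable_snd) => x;
  rewrite npair_unpair.
Qed.

Lemma computable_snd_snd : computable (fun x => (unpair (unpair x).2).2).
Proof. exact: computable_comp computable_snd computable_snd. Qed.

Lemma computable_cst n : computable (fun _ => n).
Proof.
by elim: n => [|n IH]; [exact: computable0 | exact: computable_comp computableS IH].
Qed.

Lemma computable_add f g :
  computable f -> computable g -> computable (fun x => f x + g x)%N.
Proof.
apply: computable_bin; apply: eq_computable
  (computable_rec computable_id (computable_comp computableS computable_snd_snd)) => x.
elim: (unpair x).2 => [|i IH] /=; first by rewrite addn0.
by rewrite !unpair_npair /= IH addnS.
Qed.

Lemma computable_mul f g :
  computable f -> computable g -> computable (fun x => f x * g x)%N.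
Proof.
apply: computable_bin; apply: eq_computable
  (computable_rec computable0 (computable_add computable_snd_snd computable_fst)) => x.
elim: (unpair x).2 => [|i IH] /=; first by rewrite muln0.
by rewrite !unpair_npair /= IH mulnS addnC.
Qed.

Lemma computable_pred f : computable f -> computable (fun x => (f x).-1).
Proof.
apply: (computable_bin (B := fun _ n => n.-1)) computable0.
apply: eq_computable (computable_rec computable0 (computable_comp computable_fst computable_snd)).
by move=> x; case: (unpair x).2 => [|i] //=; rewrite !unpair_npair.
Qed.

Lemma computable_sub f g :
  computable f -> computable g -> computable (fun x => f x - g x)%N.
Proof.
apply: computable_bin; apply: eq_computable
  (computable_rec computable_id (computable_pred computable_snd_snd)) => x.
elim: (unpair x).2 => [|i IH] /=; first by rewrite subn0.
by rewrite !unpair_npair /= IH subnS.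
Qed.

Lemma computable_ifz c u v : computable c -> computable u -> computable v ->
  computable (fun x => if c x == 0%N then u x else v x).
Proof.
move=> Hc Hu Hv.
have Hsel : computable (fun x => prim_rec (fun a => (unpair a).1)
    (fun w => (unpair (unpair w).1).2) (unpair x).1 (unpair x).2).
  by apply: computable_rec; [exact: computable_fst | exact: computable_comp computable_snd computable_fst].
apply: eq_computable (computable_bin Hsel (computable_pair Hu Hv) Hc) => x.
by case: (c x) => [|i] /=; rewrite !unpair_npair.
Qed.

Lemma computable_eqn f g : computable f -> computable g ->
  computable (fun x => if f x == g x then 0%N else 1%N).
Proof.
move=> Hf Hg; apply: eq_computable (computable_ifz
  (computable_add (computable_sub Hf Hg) (computable_sub Hg Hf)) computable0 (computable_cst 1)) => x.
by case: ifP; case: ifP => //; lia.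
Qed.

Lemma computable_odd f : computable f -> computable (fun x => odd (f x) : nat).
Proof.
apply: (computable_bin (B := fun _ n => odd n : nat)) computable0.
apply: eq_computable (computable_rec computable0
  (computable_sub (computable_cst 1) computable_snd_snd)) => x.
elim: (unpair x).2 => [|i IH] //=.
by rewrite !unpair_npair /= IH; case: (odd i).
Qed.

Lemma computable_half f : computable f -> computable (fun x => (f x)./2).
Proof.
apply: (computable_bin (B := fun _ n => n./2)) computable0.
apply: eq_computable (computable_rec computable0 (computable_add computable_snd_snd
  (computable_odd (computable_comp computable_fst computable_snd)))) => x.
elim: (unpair x).2 => [|i IH] //=.
by rewrite !unpair_npair /= IH uphalf_half addnC.
Qed.

Lemma domain_restrict p g d : computable g -> computable d ->
  exists p', forall x, (exists k y, eval k p' x = Some y) <->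
                       d x = 0%N /\ exists k y, eval k p (g x) = Some y.
Proof.
move=> [pg Hg] Hd0.
have [pd Hd] : computable (fun w => d (unpair w).1) by apply: computable_comp Hd0 computable_fst.
(* [x |-> p (fst (npair (g x) (mu m. d x = 0)))]: the search converges iff [d x = 0] *)
exists (PComp p (PComp PFst (PPair pg (PMu pd)))) => x; split.
  move=> [[|k1] [y]] //; rewrite eval_comp.
  case E1: (eval k1 (PComp PFst _) x) => [z|] // Ey.
  case: k1 E1 Ey => [//|k2] E1 Ey; rewrite eval_comp in E1.
  case E2: (eval k2 (PPair _ _) x) E1 => [w|] // Ez.
  case: k2 E2 Ez Ey => [//|k3] E2 Ez Ey; rewrite eval_pair in E2.
  case E3: (eval k3 pg x) E2 => [a|] //; case E4: (eval k3 (PMu pd) x) => [b|] // [Ew].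
  case: k3 E3 E4 Ez Ey => [//|k4] E3 E4 Ez Ey; rewrite eval_mu in E4.
  have := computes_eval Hd (mu_search_some E4); rewrite unpair_npair /= => d0.
  split => //; exists k4.+3, y.
  suff <- : z = g x by [].
  by move: Ez => /= [<-]; rewrite -Ew unpair_npair /=; apply: computes_eval Hg E3.
move=> [d0 [k [y Ey]]].
have [kg Eg] := Hg x; have [kd Ed] := Hd (npair x 0).
rewrite unpair_npair /= d0 in Ed.
pose K := maxn k (maxn kg kd).
exists K.+4.+1, y; rewrite eval_comp eval_comp eval_pair.
rewrite (eval_extends _ Eg); last by rewrite /K; lia.
rewrite eval_mu mu_searchS (eval_extends _ Ed); last by rewrite /K; lia.
change (obind (eval K.+4 p) (Some (unpair (npair (g x) 0)).1) = Some y).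
rewrite unpair_npair; apply: (eval_extends _ Ey); rewrite /K; lia.
Qed.

(** * Leading zeros *)

Definition halve_step (w : nat) : nat :=
  if odd (unpair w).1 || ((unpair w).1 == 0%N) then w
  else npair (unpair w).1./2 ((unpair w).2.*2).

Definition split_pow2 (y : nat) : nat := iter y halve_step (npair y 1).

Lemma computable_halve_step f : computable f -> computable (fun x => halve_step (f x)).
Proof.
move=> Hf; have Hz := computable_comp computable_fst Hf.
have Hp := computable_comp computable_snd Hf.
apply: eq_computable (computable_ifz (computable_add (computable_odd Hz)
    (computable_sub (computable_cst 1) (computable_eqn Hz computable0)))
  (computable_pair (computable_half Hz) (computable_add Hp Hp)) Hf) => x.
by rewrite /halve_step -addnn; case: (unpair (f x)).1 => [|[|z]] //=; case: (odd z).
Qed.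

Lemma computable_split_pow2 f : computable f -> computable (fun x => split_pow2 (f x)).
Proof.
move=> Hf; apply: (computable_bin (B := fun a _ => split_pow2 a) _ Hf computable0).
have Hiter := computable_rec (computable_pair computable_id (computable_cst 1))
  (computable_halve_step computable_snd_snd).
apply: eq_computable (computable_bin Hiter computable_fst computable_fst) => x.
rewrite /split_pow2 /=; elim: {2 3}(unpair x).1 => [|i IH] //=.
by rewrite !unpair_npair /= IH.
Qed.

Lemma iter_halve_step k m o P : odd o ->
  iter k halve_step (npair (2 ^ m * o) P) = npair (2 ^ (m - k) * o) (P * 2 ^ minn k m).
Proof.
move=> oo; elim: k => [|k IH] /=; first by rewrite subn0 min0n expn0 muln1.
rewrite IH /halve_step unpair_npair /=.
case: (leqP m k) => mk.
  rewrite (eqP (_ : m - k == 0)%N) ?subn_eq0 // (eqP (_ : m - k.+1 == 0)%N) ?subn_eq0 ?leqW //.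
  by rewrite expn0 mul1n oo /= (minn_idPr (leqW mk)).
have -> : (m - k = (m - k.+1).+1)%N by lia.
rewrite expnS -mulnA oddM /= muln_eq0 /= muln_eq0 expn_eq0 /=.
have -> : (o == 0%N) = false by apply/eqP => o0; rewrite o0 in oo.
rewrite (minn_idPl mk) expnS mul2n half_double -muln2; congr npair; lia.
Qed.

Lemma split_pow2_oddM m o : odd o -> split_pow2 (2 ^ m * o) = npair o (2 ^ m).
Proof.
move=> oo; rewrite /split_pow2 iter_halve_step //.
have mle : (m <= 2 ^ m * o)%N.
  apply: leq_trans (ltnW (ltn_expl m (isT : 1 < 2)))%N _.
  by rewrite leq_pmulr //; case: o oo.
by rewrite (minn_idPr mle) mul1n (eqP (_ : m - _ == 0)%N) ?expn0 ?mul1n // subn_eq0.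
Qed.

Fixpoint nlead0 (s : bstring) : nat := if s is false :: s' then (nlead0 s').+1 else 0.
Fixpoint strip0 (s : bstring) : bstring := if s is false :: s' then strip0 s' else s.

Lemma code_eq0 s : code s = 0%N -> s = [::].
Proof. by case: s => //= b s; lia. Qed.

Lemma code_strip0 s : (code s).+1 = (2 ^ nlead0 s * (code (strip0 s)).+1)%N.
Proof.
elim: s => [//|[] s IH] /=; first by rewrite mul1n.
by rewrite expnS -mulnA -IH; lia.
Qed.

Lemma odd_code_strip0 s : odd (code (strip0 s)).+1.
Proof.
elim: s => [//|[] s IH] //=.
by rewrite -addnA oddD odd_double.
Qed.

Lemma split_pow2_code s :
  split_pow2 (code s).+1 = npair (code (strip0 s)).+1 (2 ^ nlead0 s).
Proof. by rewrite code_strip0 split_pow2_oddM // odd_code_strip0. Qed.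

Lemma strip0_rcons s b :
  strip0 s != [::] -> strip0 (rcons s b) != [::] /\ nlead0 (rcons s b) = nlead0 s.
Proof. by elim: s => [//|[] s IH] //= /IH [-> ->]. Qed.

Lemma strip0_lead0_true c :
  strip0 (rcons (nseq c false) true) = [:: true] /\ nlead0 (rcons (nseq c false) true) = c.
Proof. by elim: c => [|c [IH1 IH2]] //=; rewrite IH1 IH2. Qed.

(* [lead0_consistent n (code s)] holds iff [s] is a prefix of some
   sequence starting with [n] zeros and then a one. *)
Definition lead0_consistent (n c : nat) : bool :=
  ((unpair (split_pow2 c.+1)).1 == 1%N) || ((unpair (split_pow2 c.+1)).2 == 2 ^ n)%N.

Lemma lead0_consistent_code n s :
  lead0_consistent n (code s) = (strip0 s == [::]) || (nlead0 s == n).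
Proof.
rewrite /lead0_consistent split_pow2_code unpair_npair /= eqSS eqn_exp2l //.
by congr orb; apply/eqP/eqP => [/code_eq0 | ->].
Qed.

Lemma computable_lead0_consistent n :
  computable (fun c => if lead0_consistent n c then 0%N else 1%N).
Proof.
have Hsplit := computable_split_pow2 (computable_comp computableS computable_id).
have H1 := computable_eqn (computable_comp computable_fst Hsplit) (computable_cst 1).
have H2 := computable_eqn (computable_comp computable_snd Hsplit) (computable_cst (2 ^ n)).
apply: eq_computable (computable_ifz H1 computable0 H2) => c.
by rewrite /lead0_consistent; case: (_ == 1%N).
Qed.

Lemma strip0_all_false s :
  (forall i, (i < size s)%N -> nth false s i = false) -> strip0 s = [::].
Proof.
elim: s => [//|b s IH] Hs; have /= -> := Hs 0%N isT.
by apply: IH => i; apply: (Hs i.+1).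
Qed.

Lemma lead0_first_true s n :
  (forall i, (i < n)%N -> (i < size s)%N -> nth false s i = false) ->
  ((n < size s)%N -> nth false s n = true) -> (strip0 s == [::]) || (nlead0 s == n).
Proof.
elim: s n => [//|b s IH] [|n] Hlt Hn; first by have /= -> := Hn isT.
have /= -> := Hlt 0%N isT isT; apply: IH => [i i1 i2|ns]; first exact: (Hlt i.+1).
exact: (Hn ns).
Qed.

Lemma prefix_lead0_consistent (X : nat -> bool) :
  exists n, forall s, prefix s X -> lead0_consistent n (code s).
Proof.
case: (pselect (exists i, X i)) => [exX|noX]; last first.
  exists 0%N => s Xs; rewrite lead0_consistent_code strip0_all_false // => i i1.
  by rewrite Xs //; apply/negbTE/negP => Xi; apply: noX; exists i.
case: (ex_minnP exX) => n Xn nmin; exists n => s Xs.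
rewrite lead0_consistent_code; apply: lead0_first_true => [i i1 i2|ns]; last by rewrite Xs.
by rewrite Xs //; apply/negbTE/negP => /nmin; rewrite leqNgt i1.
Qed.

(** * Martin-Löf tests under domination *)

Local Open Scope ring_scope.

Lemma esum_le_scale (R : realType) (T : choiceType) (a b : T -> R) (V U : set T) (K : R) :
  0 <= K -> (forall s, V s -> U s) -> (forall s, 0 <= b s) ->
  (forall s, V s -> a s <= K * b s) ->
  (\esum_(s in V) (a s)%:E <= K%:E * \esum_(s in U) (b s)%:E)%E.
Proof.
move=> K0 VU b0 ab; apply: ge_ereal_sup => _ [X [finX XV] <-].
apply: (@le_trans _ _ (\sum_(s \in X) (K%:E * (b s)%:E))%E).
  by apply: lee_fsum => // s Xs; rewrite -EFinM lee_fin; apply/ab/XV.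
rewrite -ge0_mule_fsumr; last by move=> s; rewrite lee_fin.
apply: lee_wpmul2l; first by rewrite lee_fin.
by apply: ereal_sup_ubound; exists X => //; split => // s /XV /VU.
Qed.

Lemma natr_pow2_mulV (R : realType) n i :
  (2 ^ n)%:R * (2%:R : R) ^- (i + n) = (2%:R : R) ^- i.
Proof.
rewrite natrX exprD invfM mulrCA mulrV ?mulr1 //.
by rewrite unitfE expf_neq0 // pnatr_eq0.
Qed.

(* A test [U] for [rho] yields the test [i |-> U (i + n) restricted to Q] for [nu]. *)
Lemma MLR_dominated (R : realType) (rho nu : bstring -> R) (n : nat) (Q : nat -> bool)
    (X : nat -> bool) :
  computable (fun c => if Q c then 0%N else 1%N) ->
  (forall s, 0 <= rho s) ->
  (forall s, Q (code s) -> nu s <= (2 ^ n)%:R * rho s) ->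
  (forall s, prefix s X -> Q (code s)) ->
  MLR nu X -> MLR rho X.
Proof.
move=> HQ rho0 nu_le XQ nuX U [p Hp] Urho XU.
have Hshift : computable (fun x => npair ((unpair x).1 + n) (unpair x).2).
  exact: computable_pair (computable_add computable_fst (computable_cst n)) computable_snd.
have [p' Hp'] := domain_restrict p Hshift (computable_comp HQ computable_snd).
apply: (nuX (fun i s => U (i + n)%N s /\ Q (code s))).
- exists p' => i s; rewrite Hp' !unpair_npair /= -Hp.
  by split => [[? ?]|[]]; [split => //; rewrite ifT | case: ifP].
- move=> i; apply: le_trans (esum_le_scale (U := U (i + n)%N) (K := (2 ^ n)%:R) _ _ rho0 _) _.
  + by rewrite ler0n.
  + by move=> s [].
  + by move=> s [_]; apply: nu_le.
  apply: le_trans (lee_wpmul2l _ (Urho (i + n)%N)) _; first by rewrite lee_fin ler0n.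
  by rewrite -EFinM natr_pow2_mulV.
- move=> i; have [s Us Xs] := XU (i + n)%N.
  by exists s => //; split => //; apply: XQ.
Qed.

(** * A positive left-c.e. semi-measure *)

Lemma rat_of_nat_npair a b : rat_of_nat (npair a b) = (int_of_nat a)%:~R / (b.+1)%:R.
Proof. by rewrite /rat_of_nat unpair_npair. Qed.

Lemma code_rcons s b : code (rcons s b) = (code s + (1 + b) * 2 ^ size s)%N.
Proof.
elim: s => [|c s IH]; first by case: b.
by rewrite rcons_cons /= IH /= expnS; lia.
Qed.

Lemma code_lt_pow2 s : ((code s).+1 < 2 ^ (size s).+1)%N.
Proof. by elim: s => [//|[] s IH]; rewrite /= expnS; lia. Qed.

Lemma inv_sqrD_le (R : realFieldType) (x a : R) : 0 < x -> x < 2 * a ->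
  ((x + a) ^+ 2)^-1 + ((x + 2 * a) ^+ 2)^-1 <= (x ^+ 2)^-1.
Proof.
move=> x0 xa; have a0 : 0 < a by nra.
have le_half y : x + a <= y -> (y ^+ 2)^-1 <= (2 * x ^+ 2)^-1.
  by move=> ay; rewrite lef_pV2 ?posrE; nra.
apply: le_trans (lerD (le_half _ (lexx _)) (le_half _ _)) _; first by lra.
by rewrite invfM -mulrDl (_ : 2^-1 + 2^-1 = 1 :> R) ?mul1r //; field.
Qed.

Definition inv_sq_code (R : realType) (s : bstring) : R := (((code s).+1 ^ 2)%N%:R)^-1.

Lemma inv_sq_code_gt0 (R : realType) s : 0 < inv_sq_code R s.
Proof. by rewrite invr_gt0 ltr0n expn_gt0. Qed.

Lemma semimeasure_inv_sq_code (R : realType) : semimeasure (inv_sq_code R).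
Proof.
split; [|split].
- move=> s; rewrite (ltW (inv_sq_code_gt0 _ _)) /= invf_le1 ?ltr0n ?expn_gt0 //.
  by rewrite ler1n expn_gt0.
- by rewrite /inv_sq_code /= invr1.
- move=> s; rewrite /inv_sq_code !code_rcons /= !natrX.
  have := code_lt_pow2 s; rewrite expnS.
  set c := code s; set A := (2 ^ size s)%N => cA.
  have -> : ((c + (1 + 0) * A).+1 = c.+1 + A)%N by lia.
  have -> : ((c + (1 + 1) * A).+1 = c.+1 + 2 * A)%N by lia.
  rewrite !natrD addr0 (_ : A%:R + A%:R = 2 * A%:R :> R); last by ring.
  apply: inv_sqrD_le; first by rewrite ltr0n.
  by rewrite -natrM ltr_nat; lia.
Qed.

Lemma left_ce_semimeasure_inv_sq_code (R : realType) :
  left_ce_semimeasure (inv_sq_code R).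
Proof.
split; first exact: semimeasure_inv_sq_code.
pose f x := npair 2 (((unpair x).1.+1 * (unpair x).1.+1).-1).
have fE s t : rat_of_nat (f (npair (code s) t)) = (((code s).+1 ^ 2)%N%:R)^-1.
  by rewrite /f unpair_npair rat_of_nat_npair prednK ?muln_gt0 // mul1r.
exists f; split.
  apply: computable_pair (computable_cst 2) _; apply/computable_pred/computable_mul;
  exact: computable_comp computableS computable_fst.
split => [s t|s eps eps0]; first by rewrite !fE.
by exists 0%N => t _; rewrite fE fmorphV rmorph_nat subrr normr0.
Qed.

Lemma universal_gt0 (R : realType) (M : bstring -> R) : universal M -> forall s, 0 < M s.
Proof.
move=> Muniv s; have [c Hc] := Muniv _ (left_ce_semimeasure_inv_sq_code R).
have := lt_le_trans (inv_sq_code_gt0 R s) (Hc s).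
by case: c {Hc} => [|c]; rewrite ?mul0r ?ltxx // pmulr_rgt0 // ltr0n.
Qed.

(** * The damped semi-measure *)

Definition dampq (s : bstring) : rat :=
  if strip0 s == [::] then 1 else ((2 ^ nlead0 s)%N%:R)^-1.

Definition damp (R : realType) (s : bstring) : R := ratr (dampq s).

Definition damped (R : realType) (M : bstring -> R) (s : bstring) : R := damp R s * M s.

Lemma dampE (R : realType) s :
  damp R s = if strip0 s == [::] then 1 else ((2 ^ nlead0 s)%N%:R)^-1.
Proof. by rewrite /damp /dampq; case: ifP; rewrite ?rmorph1 // fmorphV rmorph_nat. Qed.

Lemma dampq_ge0 s : 0 <= dampq s.
Proof. by rewrite /dampq; case: ifP; rewrite // invr_ge0 ler0n. Qed.

Lemma damp_ge0 (R : realType) s : 0 <= damp R s.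
Proof. by rewrite ler0q dampq_ge0. Qed.

Lemma damp_le1 (R : realType) s : damp R s <= 1.
Proof.
by rewrite dampE; case: ifP => // _; rewrite invf_le1 ?ltr0n ?expn_gt0 // ler1n expn_gt0.
Qed.

Lemma semimeasure_damped (R : realType) (M : bstring -> R) :
  semimeasure M -> semimeasure (damped M).
Proof.
move=> [M01 [M1 Msplit]]; have M0 s : 0 <= M s by have /andP[] := M01 s.
split; [|split].
- move=> s; have /andP [_ Ms1] := M01 s.
  by rewrite mulr_ge0 ?damp_ge0 //= mulr_ile1 ?damp_ge0 ?damp_le1.
- by rewrite /damped dampE /= mul1r.
- move=> s; rewrite /damped; case: (eqVneq (strip0 s) [::]) => s0.
    rewrite [damp R s]dampE s0 eqxx mul1r; apply: le_trans (Msplit s).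
    by apply: lerD; rewrite ler_piMl ?damp_le1.
  (* past the first one, appending a bit keeps the damping factor *)
  have [s0' l0] := strip0_rcons false s0; have [s1' l1] := strip0_rcons true s0.
  rewrite !dampE (negbTE s0) (negbTE s0') (negbTE s1') l0 l1 -mulrDr.
  by rewrite ler_wpM2l // invr_ge0 ler0n.
Qed.

Lemma rat_of_nat_scale m P : (0 < P)%N ->
  rat_of_nat (npair (unpair m).1 (((unpair m).2.+1 * P).-1)) = rat_of_nat m / P%:R.
Proof.
move=> P0; rewrite rat_of_nat_npair prednK ?muln_gt0 // natrM invfM mulrA.
by rewrite -[in RHS](npair_unpair m) rat_of_nat_npair.
Qed.

Lemma left_ce_damped (R : realType) (M : bstring -> R) : left_ce M -> left_ce (damped M).
Proof.
move=> [f [Hf [f_mono f_cvg]]].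
pose sp x := split_pow2 (unpair x).1.+1.
(* from [code s] recover whether [s] has a one and [2 ^ nlead0 s] *)
pose f' x := if (unpair (sp x)).1 == 1%N then f x
             else npair (unpair (f x)).1 (((unpair (f x)).2.+1 * (unpair (sp x)).2).-1).
have f'E s t : rat_of_nat (f' (npair (code s) t)) =
               dampq s * rat_of_nat (f (npair (code s) t)).
  rewrite /f' /sp unpair_npair /= split_pow2_code unpair_npair /= eqSS /dampq.
  case: (eqVneq (strip0 s) [::]) => [->|s0]; first by rewrite mul1r.
  have -> : (code (strip0 s) == 0%N) = false by apply/eqP => /code_eq0; apply/eqP.
  by rewrite rat_of_nat_scale ?expn_gt0 // mulrC.
exists f'; split.
  have Hsp := computable_split_pow2 (computable_comp computableS computable_fst).
  apply: eq_computable (computable_ifz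
      (computable_eqn (computable_comp computable_fst Hsp) (computable_cst 1)) Hf
      (computable_pair (computable_comp computable_fst Hf) (computable_pred
        (computable_mul (computable_comp computableS (computable_comp computable_snd Hf))
                        (computable_comp computable_snd Hsp))))) => x.
  by rewrite /f'; case: (_ == 1%N).
split => [s t|s eps eps0]; first by rewrite !f'E ler_wpM2l ?dampq_ge0 // f_mono.
have [N HN] := f_cvg s eps eps0; exists N => t Nt.
rewrite f'E rmorphM -/(damp R s) /damped -mulrBr normrM ger0_norm ?damp_ge0 //.
by apply: le_lt_trans (HN t Nt); rewrite ler_piMl ?normr_ge0 ?damp_le1.
Qed.

Lemma damped_not_universal (R : realType) (M : bstring -> R) :
  left_ce_semimeasure M -> universal M -> ~ universal (damped M).
Proof.
move=> Mlce Muniv Duniv; have [c Hc] := Duniv M Mlce.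
have [s1 l1] := strip0_lead0_true c; set s := rcons (nseq c false) true.
have c_lt : c%:R < (2 ^ c)%:R :> R by rewrite ltr_nat ltn_expl.
have := Hc s; rewrite /damped dampE s1 l1 /= mulrA.
rewrite -{1}[M s]mul1r ler_pM2r ?universal_gt0 // ler_pdivlMr ?ltr0n ?expn_gt0 // mul1r.
by move=> /(lt_le_trans c_lt); rewrite ltxx.
Qed.

Lemma le_damped (R : realType) (M : bstring -> R) n s : 0 <= M s ->
  lead0_consistent n (code s) -> M s <= (2 ^ n)%N%:R * damped M s.
Proof.
move=> M0; rewrite lead0_consistent_code /damped dampE.
case: (eqVneq (strip0 s) [::]) => [_ _|_ /eqP ->].
  by rewrite mul1r ler_peMl // ler1n expn_gt0.
by rewrite mulrA mulfV ?mul1r // pnatr_eq0 expn_eq0.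
Qed.

Lemma MLR_damped (R : realType) (M : bstring -> R) X :
  semimeasure M -> MLR (damped M) X <-> MLR M X.
Proof.
move=> Msemi; have M0 s : 0 <= M s by have /andP[] := Msemi.1 s.
have D0 s : 0 <= damped M s by have /andP[] := (semimeasure_damped Msemi).1 s.
split.
  apply: (MLR_dominated (n := 0%N) (Q := fun _ => true)) (computable_cst 0) _ _ _ => //.
  by move=> s _; rewrite expn0 mul1r ler_piMl ?damp_le1.
have [n Xn] := prefix_lead0_consistent X.
apply: (MLR_dominated (n := n) (computable_lead0_consistent n)) => // s.
exact: le_damped.
Qed.

Lemma MLR_universal (R : realType) (M : bstring -> R) X :
  left_ce_semimeasure M -> universal M ->
  MLR M X <-> exists rho : bstring -> R, left_ce_semimeasure rho /\ MLR rho X.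
Proof.
move=> Mlce Muniv; split => [MX|[rho [rho_lce rhoX]]]; first by exists M.
have M0 s : 0 <= M s by have /andP[] := Mlce.1.1 s.
have [c Hc] := Muniv rho rho_lce.
apply: (MLR_dominated (n := c) (Q := fun _ => true) (computable_cst 0) M0 _ _ rhoX) => // s _.
by apply: le_trans (Hc s) _; rewrite ler_wpM2r // ler_nat ltnW // ltn_expl.
Qed.

Theorem proposition5p3 (R : realType) (M : bstring -> R) :
  left_ce_semimeasure M -> universal M ->
  exists Mt : bstring -> R,
    left_ce_semimeasure Mt /\ ~ universal Mt /\
    (forall X, MLR Mt X <-> MLR M X) /\
    (forall X, MLR M X <-> exists rho : bstring -> R,
                              left_ce_semimeasure rho /\ MLR rho X).
Proof.
move=> [Msemi Mce] Muniv; exists (damped M); split.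
  by split; [apply: semimeasure_damped | apply: left_ce_damped].
split; first exact: damped_not_universal.
by split => X; [apply: MLR_damped | apply: MLR_universal].
Qed.
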